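(* Let $X$ be a real linear space, $T$ an infinite index set, and $f, f_t : X \to \overline{\mathbb{R}} := \mathbb{R}\cup\{\pm\infty\}$ ($t \in T$) convex proper functions. Consider the problem $(P)$: minimize $f(x)$ subject to $f_t(x)\le 0$ for all $t\in T$, with optimal value $\inf(P)=\inf\{f(x): f_t(x)\le0\ \forall t\in T\}$. Let $h:=\sup_{t\in T} f_t$ and $\Delta_1 := \operatorname{dom} f\cap\operatorname{dom} h$. Assume the strong Slater condition: there exist $\alpha>0$ and $a\in\operatorname{dom} f$ such that $f_t(a)\le-\alpha$ for all $t\in T$. Then the supremum over $s\ge 0$ below is attained and $$\inf(P)=\max_{s\ge0}\inf_{x\in\Delta_1}\big(f(x)+s\,h(x)\big)=\lim_{\varepsilon\downarrow0}\inf\{f(x): f_t(x)\le\varepsilon \text{ for all } t\in T\}.$$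
   Context: $\operatorname{dom} g := \{x : g(x)<+\infty\}$; a proper function never takes the value $-\infty$ and has nonempty domain. Convention: $\inf\emptyset=+\infty$. *)

From HB Require Import structures.
From mathcomp Require Import all_boot all_order all_algebra.
From mathcomp Require Import all_classical all_reals all_analysis.
Set Implicit Arguments. Unset Strict Implicit. Unset Printing Implicit Defensive.
Import Order.TTheory GRing.Theory Num.Theory.
Local Open Scope classical_set_scope.
Local Open Scope ring_scope.
Local Open Scope ereal_scope.

Section ExtConvex.
Variables (R : realType) (X : lmodType R).

Definition edom (g : X -> \bar R) : set X := [set x | g x < +oo].

Definition eproper (g : X -> \bar R) : Prop :=
  (forall x, g x != -oo) /\ edom g !=set0.

(* convexity (for functions not taking -oo this is convexity of the epigraph),
   with the conventions r * (+oo) = +oo for r > 0 *)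
Definition econvex (g : X -> \bar R) : Prop :=
  forall (x y : X) (l : R), (0 < l < 1)%R ->
    g ((l *: x + (1 - l) *: y)%R) <= (l%:E * g x) + ((1 - l)%:E * g y).

Definition esupfam (T : Type) (F : T -> X -> \bar R) : X -> \bar R :=
  fun x => ereal_sup (range (fun t => F t x)).

Definition pert_value (T : Type) (f : X -> \bar R) (F : T -> X -> \bar R)
  (eps : R) : \bar R :=
  ereal_inf [set f x | x in [set x | forall t, F t x <= eps%:E]].

Definition dual_fun (T : Type) (f : X -> \bar R) (F : T -> X -> \bar R)
  (s : R) : \bar R :=
  ereal_inf [set f x + s%:E * esupfam F x | x in edom f `&` edom (esupfam F)].
End ExtConvex.

From HB Require Import structures.
From mathcomp Require Import all_boot all_order all_algebra.
From mathcomp Require Import all_classical all_reals all_analysis.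
From mathcomp Require Import ring lra.
Set Implicit Arguments.
Unset Strict Implicit.
Unset Printing Implicit Defensive.
Import Order.TTheory GRing.Theory Num.Theory numFieldNormedType.Exports.
Local Open Scope classical_set_scope.
Local Open Scope ring_scope.
Local Open Scope ereal_scope.

(* With h := sup_t f_t, the strong Slater point a has f a finite and h a < 0.
   When m := inf(P) is finite, s0 := inf {(f y - m) / (- h y) | h y < 0} is a
   Lagrange multiplier: for h x > 0 > h y, the point z of the segment [x, y]
   where the affine interpolation of h vanishes is feasible by convexity of h,
   and m <= f z bounds (m - f x) / h x by (f y - m) / (- h y).  Hence
   f + s0 h >= m on dom f /\ dom h, which makes the dual value at s0 equal
   to m and squeezes the perturbed values between m - s0 eps and m. *)

Section SupremumOfFamily.
Variables (R : realType) (X : lmodType R) (T : Type) (F : T -> X -> \bar R).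

Lemma esupfam_ge t x : F t x <= esupfam F x.
Proof. by apply: ereal_sup_ubound; exists t. Qed.

Lemma esupfam_le x e : esupfam F x <= e <-> forall t, F t x <= e.
Proof.
split=> [hxe t|Fxe]; first exact: le_trans (esupfam_ge t x) hxe.
by apply: ge_ereal_sup => _ [t _ <-].
Qed.

Lemma esupfam_neqNy t : (forall x, F t x != -oo) -> forall x, esupfam F x != -oo.
Proof. by move=> FtNy x; rewrite -ltNye (lt_le_trans _ (esupfam_ge t x)) ?ltNye. Qed.

Lemma econvex_esupfam : (forall t, econvex (F t)) -> econvex (esupfam F).
Proof.
move=> Fcvx x y l /[dup] l01 /andP[l0 l1]; apply: ge_ereal_sup => _ [t _ <-].
apply: le_trans (Fcvx t x y l l01) _.
by apply: leeD; rewrite lee_pmul2l ?lte_fin ?subr_gt0 //; exact: esupfam_ge.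
Qed.

End SupremumOfFamily.

Section ConvexProgram.
Variables (R : realType) (X : lmodType R) (f h : X -> \bar R).

Definition level_value (e : R) : \bar R :=
  ereal_inf [set f x | x in [set x | h x <= e%:E]].

Definition lagrange_dual (s : R) : \bar R :=
  ereal_inf [set f x + s%:E * h x | x in edom f `&` edom h].

Definition lagrange_multiplier (s : R) : Prop :=
  (0 <= s)%R /\ forall x, f x < +oo -> h x < +oo -> level_value 0 <= f x + s%:E * h x.

Lemma level_value_le x e : h x <= e%:E -> level_value e <= f x.
Proof. by move=> hxe; apply: ereal_inf_lbound; exists x. Qed.

Lemma le_level_value e1 e2 : (e1 <= e2)%R -> level_value e2 <= level_value e1.
Proof.
move=> e12; apply: le_ereal_inf_tmp => _ [x hxe <-].
by apply: level_value_le; apply: le_trans hxe _; rewrite lee_fin.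
Qed.

Lemma lagrange_dual_le_value s : (0 <= s)%R -> lagrange_dual s <= level_value 0.
Proof.
move=> s0; apply: le_ereal_inf_tmp => _ [x hx0 <-].
have [->|fx_fin] := eqVneq (f x) +oo; first exact: leey.
have shx0 : s%:E * h x <= 0 by apply: mule_ge0_le0; rewrite ?lee_fin.
apply: le_trans (geeDl _ shx0).
apply: ereal_inf_lbound; exists x => //.
by split; [rewrite /edom /= ltey | exact: le_lt_trans hx0 (ltry _)].
Qed.

Lemma ereal_sup_lagrange_dual s : (0 <= s)%R -> lagrange_dual s = level_value 0 ->
  ereal_sup [set lagrange_dual s | s in [set s | (0 <= s)%R]] = level_value 0.
Proof.
move=> s0 dual_s; apply/le_anti/andP; split.
  by apply: ge_ereal_sup => _ [r r0 <-]; exact: lagrange_dual_le_value.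
by rewrite -dual_s; apply: ereal_sup_ubound; exists s.
Qed.

Section Multiplier.
Variable s : R.
Hypothesis s_mult : lagrange_multiplier s.

Lemma lagrange_dual_multiplier : lagrange_dual s = level_value 0.
Proof.
apply/le_anti; rewrite lagrange_dual_le_value ?s_mult.1 //=.
by apply: le_ereal_inf_tmp => _ [x [fx hx] <-]; exact: s_mult.2.
Qed.

Lemma level_value_ge_multiplier e : (0 <= e)%R ->
  level_value 0 - (s * e)%:E <= level_value e.
Proof.
move=> e0; apply: le_ereal_inf_tmp => _ [x hxe <-].
have [->|fx_fin] := eqVneq (f x) +oo; first exact: leey.
have hx_fin : h x < +oo by exact: le_lt_trans hxe (ltry _).
rewrite leeBlDr // EFinM; apply: le_trans (s_mult.2 x _ hx_fin) _; first by rewrite ltey.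
by apply: leeD => //; apply: lee_wpmul2l; rewrite ?lee_fin ?s_mult.1.
Qed.

Lemma level_value_cvg : level_value e @[e --> 0%R^'+] --> level_value 0.
Proof.
apply: (@squeeze_cvge _ _ _ _ (fun e => level_value 0 - (s * e)%:E) _ (fun=> level_value 0)).
- near=> e; have e0 : (0 <= e)%R by near: e; exact: nbhs_right_ge.
  by rewrite level_value_ge_multiplier // le_level_value.
- rewrite -[X in _ --> X]sube0; apply: cvgeB; [exact: fin_num_adde_defl | exact: cvg_cst |].
  apply: cvg_EFin; first exact: nearW.
  have se_cvg : (s * e)%R @[e --> 0%R] --> (s * 0)%R.
    by apply: cvgM; [exact: cvg_cst | exact: cvg_id].
  by rewrite mulr0 in se_cvg; exact: cvg_at_right_filter se_cvg.
- exact: cvg_cst.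
Unshelve. all: by end_near.
Qed.

End Multiplier.

Section MultiplierExistence.
Hypotheses (fcvx : econvex f) (hcvx : econvex h).
Hypotheses (fNy : forall x, f x != -oo) (hNy : forall x, h x != -oo).

Let f_fin {x} : f x < +oo -> f x \is a fin_num.
Proof. by rewrite fin_numE fNy -ltey. Qed.

Let h_fin {x} : h x < +oo -> h x \is a fin_num.
Proof. by rewrite fin_numE hNy -ltey. Qed.

Section FiniteValue.
Variable m : R.
Hypothesis m_le : forall x, h x <= 0 -> m%:E <= f x.

Lemma convex_combination_bound x y (fx fy hx hy : R) :
  f x = fx%:E -> f y = fy%:E -> h x = hx%:E -> h y = hy%:E ->
  (hy < 0)%R -> (0 < hx)%R -> (m * (hx - hy) <= hx * fy - hy * fx)%R.
Proof.
move=> Efx Efy Ehx Ehy hy0 hx0.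
have d0 : (0 < hx - hy)%R by lra.
have d_neq0 : (hx - hy != 0)%R by rewrite gt_eqF.
pose l := (- hy / (hx - hy))%R.
have l01 : (0 < l < 1)%R by rewrite divr_gt0 ?oppr_gt0 //= ltr_pdivrMr // mul1r; lra.
have hz0 : h (l *: x + (1 - l) *: y)%R <= 0.
  apply: le_trans; first exact: hcvx.
  rewrite Ehx Ehy -!EFinM -EFinD lee_fin.
  by have -> : (l * hx + (1 - l) * hy = 0)%R by rewrite /l; field.
have := le_trans (m_le hz0) (@fcvx x y l l01).
rewrite Efx Efy -!EFinM -EFinD lee_fin.
have -> : (l * fx + (1 - l) * fy = (hx * fy - hy * fx) / (hx - hy))%R.
  by rewrite /l; field.
by rewrite ler_pdivlMr.
Qed.

Lemma exists_multiplier_of_lower_bound a : f a < +oo -> h a < 0 ->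
  exists2 s, (0 <= s)%R & forall x, f x < +oo -> h x < +oo -> m%:E <= f x + s%:E * h x.
Proof.
move=> fa ha.
have /EFin_fin_numP[fa' Efa] := f_fin fa.
have /EFin_fin_numP[ha' Eha] := h_fin (lt_trans ha (ltry 0%R)).
rewrite Eha lte_fin in ha.
pose B := [set r : R | exists y fy hy,
  [/\ f y = fy%:E, h y = hy%:E, (hy < 0)%R & r = ((fy - m) / - hy)%R]].
have B0 : B !=set0 by exists ((fa' - m) / - ha')%R; exists a, fa', ha'.
have Bge0 : lbound B 0%R.
  move=> _ [y [fy [hy [Efy Ehy hy0 ->]]]].
  have : m%:E <= f y by apply: m_le; rewrite Ehy lee_fin ltW.
  rewrite Efy lee_fin => mfy.
  by apply: divr_ge0; [rewrite subr_ge0 | rewrite oppr_ge0 (ltW hy0)].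
exists (inf B); first exact: lb_le_inf.
move=> x /f_fin/EFin_fin_numP[fx Efx] /h_fin/EFin_fin_numP[hx Ehx].
rewrite Efx Ehx -EFinM -EFinD lee_fin.
case: (ltrgtP hx 0) => [hx0|hx0|hx0].
- have : (inf B <= (fx - m) / - hx)%R by apply: ge_inf; [exists 0%R | exists x, fx, hx].
  by rewrite ler_pdivlMr ?oppr_gt0 // mulrN; lra.
- have : ((m - fx) / hx <= inf B)%R.
    apply: lb_le_inf => // _ [y [fy [hy [Efy Ehy hy0 ->]]]].
    have := convex_combination_bound Efx Efy Ehx Ehy hy0 hx0.
    by rewrite ler_pdivrMr ?oppr_gt0 // mulrAC ler_pdivlMr //; nra.
  by rewrite ler_pdivrMr //; lra.
- by rewrite hx0 mulr0 addr0 -lee_fin -Efx; apply: m_le; rewrite Ehx hx0.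
Qed.

End FiniteValue.

Lemma exists_lagrange_multiplier a : f a < +oo -> h a < 0 -> exists s, lagrange_multiplier s.
Proof.
move=> fa ha; rewrite /lagrange_multiplier.
have value_le_fa : level_value 0 <= f a by apply: level_value_le; exact: ltW.
case E: (level_value 0) => [m| |].
- have m_le x : h x <= 0 -> m%:E <= f x by rewrite -E; exact: level_value_le.
  by have [s s0 s_mult] := exists_multiplier_of_lower_bound m_le fa ha; exists s.
- by move: value_le_fa; rewrite E leye_eq => /eqP fay; rewrite fay in fa.
- by exists 0%R; split => // x _ _; exact: leNye.
Qed.

End MultiplierExistence.
End ConvexProgram.

Lemma pert_value_level_value (R : realType) (X : lmodType R) (T : Type)
    (f : X -> \bar R) (F : T -> X -> \bar R) (e : R) :
  pert_value f F e = level_value f (esupfam F) e.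
Proof.
by congr (ereal_inf (f @` _)); apply/seteqP; split=> x /= /esupfam_le.
Qed.

Theorem proposition3p2 (R : realType) (X : lmodType R) (T : Type)
  (f : X -> \bar R) (F : T -> X -> \bar R) :
  infinite_set [set: T] ->
  eproper f -> econvex f ->
  (forall t, eproper (F t)) -> (forall t, econvex (F t)) ->
  (exists alpha : R, exists a : X, (0 < alpha)%R /\ edom f a /\
      (forall t, F t a <= (- alpha)%:E)) ->
  let infP := pert_value f F 0 in
  (exists s0 : R, (0 <= s0)%R /\
      dual_fun f F s0 = ereal_sup [set dual_fun f F s | s in [set s : R | (0 <= s)%R]]) /\
  infP = ereal_sup [set dual_fun f F s | s in [set s : R | (0 <= s)%R]] /\
  (pert_value f F @ 0%R^'+ --> infP).
Proof.
move=> /infinite_setN0[t0 _] [fNy _] fcvx Fpr Fcvx [alpha [a [alpha0 [fa Fa]]]] infP.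
set h := esupfam F.
have hNy : forall x, h x != -oo := esupfam_neqNy (Fpr t0).1.
have ha : h a < 0.
  apply: (@le_lt_trans _ _ (- alpha)%:E); first exact/esupfam_le.
  by rewrite lte_fin oppr_lt0.
have [s s_mult] := exists_lagrange_multiplier fcvx (econvex_esupfam Fcvx) fNy hNy fa ha.
have dual_s := lagrange_dual_multiplier s_mult.
have dualE : dual_fun f F = lagrange_dual f h by [].
have pertE : pert_value f F = level_value f h.
  by apply/funext => e; exact: pert_value_level_value.
rewrite /infP dualE pertE (ereal_sup_lagrange_dual s_mult.1 dual_s).
split; first by exists s; split; [exact: s_mult.1 | exact: dual_s].
by split=> //; exact: level_value_cvg s_mult.
Qed.
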